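(* Let $X$ be a metric space and $f : \mathbb{N} \to X$ a map. Then the following are equivalent: (i) $f$ can be extended to a continuous map $\widehat{f} : \widehat{\mathbb{N}} \to X$. (ii) For every $s \in \widehat{\mathbb{Z}}$ and every sequence of positive integers $(n_i)_{i \in \mathbb{N}}$ with $n_i \to +\infty$ in $\mathbb{R}$ and $\widehat{n_i} \to s$ in $\widehat{\mathbb{Z}}$ as $i \to \infty$, the limit $\lim_{i \to \infty} f(n_i)$ exists in $X$ and depends only on $s$ (not on the choice of the sequence $(n_i)$).
   Context: $\mathbb{N} = \{1,2,3,\dots\}$, $\widehat{\mathbb{Z}} = \varprojlim_n \mathbb{Z}/n\mathbb{Z}$ with its profinite topology, and $\widehat{\cdot} : \mathbb{N} \to \widehat{\mathbb{Z}}$ is the natural embedding. For positive integers $m,n$, $\mathbb{Z}_{m,n}$ is the finite semigroup with underlying set $\{1,\dots,m-1\} \sqcup \mathbb{Z}/n\mathbb{Z}$ (addition in $\{1,\dots,m-1\}$ when the sum is $< m$, otherwise addition modulo $n$ landing in $\mathbb{Z}/n\mathbb{Z}$), with quotient map $\pi_{m,n}: \mathbb{N} \to \mathbb{Z}_{m,n}$ sending $a$ to $a$ if $a<m$ and to $a \bmod n$ if $a \ge m$; for $m \le k$, $n \mid l$ there are natural compatible maps $\mathbb{Z}_{k,l} \to \mathbb{Z}_{m,n}$. $\widehat{\mathbb{N}}$ is the projective limit of the $\mathbb{Z}_{m,n}$ (each with the discrete topology), with the projective limit topology; it is a compact Hausdorff space, $\mathbb{N}$ embeds in it via $n \mapsto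 (\pi_{m,n}(n))_{m,n}$, and as a set $\widehat{\mathbb{N}} = \mathbb{N} \sqcup \widehat{\mathbb{Z}}$. A sequence of positive integers $(n_i)$ converges to $s \in \widehat{\mathbb{Z}} \subset \widehat{\mathbb{N}}$ if and only if $n_i \to \infty$ in $\mathbb{R}$ and $\widehat{n_i} \to s$ in $\widehat{\mathbb{Z}}$. *)

From HB Require Import structures.
From mathcomp Require Import all_boot all_order all_algebra.
From mathcomp Require Import all_classical all_reals all_analysis.
Set Implicit Arguments. Unset Strict Implicit. Unset Printing Implicit Defensive.
Import Order.TTheory GRing.Theory Num.Theory.
Local Open Scope classical_set_scope.

(** * The profinite integers  Zhat = lim_n Z/nZ.
    Indexing convention: the component of index [n : nat] lives in
    Z/(n+1)Z and is represented by its residue in {0,...,n}. *)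
Definition isZhat (s : nat -> nat) : Prop :=
  (forall n, s n <= n) /\
  (forall n l, n.+1 %| l.+1 -> s l %% n.+1 = s n).

Definition Zhat := {s : nat -> nat | isZhat s}.

Lemma embZ_proof (a : nat) : isZhat (fun n => a %% n.+1).
Proof.
split=> [n|n l hd]; first by rewrite -ltnS ltn_pmod.
by rewrite modn_dvdm.
Qed.

Definition embZ (a : nat) : Zhat := exist _ (fun n => a %% n.+1) (embZ_proof a).

HB.instance Definition _ := gen_eqMixin Zhat.
HB.instance Definition _ := gen_choiceMixin Zhat.
HB.instance Definition _ := isPointed.Build Zhat (embZ 0).
(** profinite topology = projective limit topology of the discrete Z/nZ:
    generated by the sets {s | s_n = k}. *)
HB.instance Definition _ := @isSubBaseTopological.Build Zhat
  (nat * nat)%type setT (fun i => [set s : Zhat | sval s i.1 = i.2]).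

(** Indexing convention: the component of index [(m, n) : nat * nat] lives in
    Z_{m+1,n+1} = {1,...,m} ⊔ Z/(n+1)Z, an element being represented as
    [inl a] with 1 <= a <= m, or [inr c] with c in {0,...,n} (a residue). *)
Definition Zmn_valid (m n : nat) (v : nat + nat) : bool :=
  match v with inl a => (0 < a <= m) | inr c => c <= n end.

Definition pimn (m n a : nat) : nat + nat :=
  if a <= m then inl a else inr (a %% n.+1).

Definition Zmn_trans (m n : nat) (v : nat + nat) : nat + nat :=
  match v with inl a => pimn m n a | inr c => inr (c %% n.+1) end.

Definition isNhat (x : nat -> nat -> nat + nat) : Prop :=
  (forall m n, Zmn_valid m n (x m n)) /\
  (forall m n k l, m <= k -> n.+1 %| l.+1 -> Zmn_trans m n (x k l) = x m n).

Definition Nhat := {x : nat -> nat -> nat + nat | isNhat x}.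

Lemma embN_proof (a : nat) : 0 < a -> isNhat (fun m n => pimn m n a).
Proof.
move=> ha; split=> [m n|m n k l hmk hd]; rewrite /pimn.
  by case: ifP => h /=; [rewrite ha h | rewrite -ltnS ltn_pmod].
case: ifP => hak /=; first by [].
rewrite modn_dvdm //; case: ifP => // ham.
by move: hak; rewrite (leq_trans ham hmk).
Qed.

Definition embN (a : nat) (ha : 0 < a) : Nhat :=
  exist _ (fun m n => pimn m n a) (embN_proof ha).

HB.instance Definition _ := gen_eqMixin Nhat.
HB.instance Definition _ := gen_choiceMixin Nhat.
HB.instance Definition _ := isPointed.Build Nhat (@embN 1 isT).
(** projective limit topology of the discrete Z_{m,n}: generated by the sets
    {x | x_{(m,n)} = v}; indices with [None] give the (irrelevant) empty set. *)
HB.instance Definition _ := @isSubBaseTopological.Build Nhat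
  (nat * nat * option (nat + nat))%type setT
  (fun i => [set x : Nhat | Some (sval x i.1.1 i.1.2) = i.2]).

From HB Require Import structures.
From mathcomp Require Import all_boot all_order all_algebra.
From mathcomp Require Import all_classical all_reals all_analysis.
From mathcomp Require Import lra.
Import Order.TTheory GRing.Theory Num.Theory.
Local Open Scope classical_set_scope.

(* In Nhat every integer is an isolated point, while a basic neighbourhood of
   s in Zhat consists of the integers > K and the points of Zhat that agree with
   s modulo 1, ..., K + 1.  Hence a continuous F restricts on Zhat to a g with
   f n_i --> g s along every n_i --> s.  Conversely, given g, let F be f on N
   and g on Zhat.  At s in Zhat the sequential hypothesis yields, by
   contradiction, a level K such that f n is close to g s for all integers
   n > K agreeing with s to order K; a point t of Zhat in the corresponding
   neighbourhood is approximated by such integers n, so g t is close to g s. *)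

Section subbase_topology.
Context {I : choiceType} {T : topologicalType} {D : set I} {b : I -> set T}.
Hypothesis openE : open = [set \bigcup_(A in E) A | E in subset^~ (finI_from D b)].

Lemma open_subbase i : D i -> open (b i).
Proof.
move=> Di; rewrite openE; exists [set b i]; last exact: bigcup_set1.
by move=> A ->; exact: finI_from1.
Qed.

Lemma cvg_subbaseP (F : set_system T) {FF : Filter F} (x : T) :
  F --> x <-> forall i, D i -> b i x -> F (b i).
Proof.
split=> [Fx i Di bix|Fb A].
  by apply: Fx; apply: open_nbhs_nbhs; split=> //; exact: open_subbase.
rewrite nbhsE => -[B [+ Bx] BA]; rewrite openE => -[E sE EB].
move: Bx; rewrite -EB => -[C EC Cx]; have [J JD JC] := sE C EC.
change (F A); apply: (filterS (subset_trans _ BA)) (@filter_bigI T I J b F FF _).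
  by move=> y Jy; rewrite -EB; exists C; rewrite // -JC.
by move=> i Ji; apply: Fb; [exact: set_mem (JD _ Ji) | move: Cx; rewrite -JC; exact].
Qed.

End subbase_topology.

Lemma Zhat_openE : open = [set \bigcup_(A in E) A | E in
  subset^~ (finI_from setT (fun i : nat * nat => [set s : Zhat | sval s i.1 = i.2]))].
Proof. by []. Qed.

Lemma Nhat_openE : open = [set \bigcup_(A in E) A | E in
  subset^~ (finI_from setT (fun i : nat * nat * option (nat + nat) =>
    [set x : Nhat | Some (sval x i.1.1 i.1.2) = i.2]))].
Proof. by []. Qed.

Lemma cvg_ZhatP (F : set_system Zhat) {FF : Filter F} (s : Zhat) :
  F --> s <-> forall n, F [set t : Zhat | sval t n = sval s n].
Proof.
rewrite (cvg_subbaseP Zhat_openE); split=> [Fs n|Fs [n k] _ /= <-].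
  exact: Fs (n, sval s n) I erefl.
exact: Fs.
Qed.

Lemma cvg_NhatP (F : set_system Nhat) {FF : Filter F} (x : Nhat) :
  F --> x <-> forall m n, F [set y : Nhat | sval y m n = sval x m n].
Proof.
rewrite (cvg_subbaseP Nhat_openE); split=> [Fx m n|Fx [[m n] v] _ /= <-].
  by apply: filterS (Fx (m, n, Some (sval x m n)) I erefl) => y [].
by apply: filterS (Fx m n) => y /= ->.
Qed.

Lemma nbhs_Nhat_cyl (x : Nhat) m n : nbhs x [set y : Nhat | sval y m n = sval x m n].
Proof. exact: (cvg_NhatP _ x).1 (@cvg_id _ (nbhs x)) m n. Qed.

Lemma Zhat_le (s : Zhat) n : sval s n <= n.
Proof. exact: (svalP s).1. Qed.

Lemma Zhat_mod (s : Zhat) {m n} : m.+1 %| n.+1 -> sval s n %% m.+1 = sval s m.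
Proof. exact: (svalP s).2. Qed.

Lemma Nhat_valid (x : Nhat) m n : Zmn_valid m n (sval x m n).
Proof. exact: (svalP x).1. Qed.

Lemma Nhat_trans (x : Nhat) {m n k l} : m <= k -> n.+1 %| l.+1 ->
  Zmn_trans m n (sval x k l) = sval x m n.
Proof. exact: (svalP x).2. Qed.

Lemma Zhat_eq (s t : Zhat) : (forall n, sval s n = sval t n) -> s = t.
Proof. by case: s t => [s ?] [t ?] /= st; apply/eq_exist/funext. Qed.

Lemma Nhat_eq (x y : Nhat) : (forall m n, sval x m n = sval y m n) -> x = y.
Proof. by case: x y => [x ?] [y ?] /= xy; apply/eq_exist/funext => m; apply/funext. Qed.

Lemma Nhat_of_Zhat_proof (s : Zhat) : isNhat (fun m n => inr (sval s n)).
Proof. by split=> [m n|m n k l _ /Zhat_mod /= ->]; first exact: Zhat_le. Qed.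

Definition Nhat_of_Zhat (s : Zhat) : Nhat := exist _ _ (Nhat_of_Zhat_proof s).

(* Index (0, n) is Z_{1,n+1} = Z/(n+1)Z, so the [inl] branch never occurs. *)
Definition Zhat_of_Nhat_fun (x : Nhat) (n : nat) : nat :=
  if sval x 0 n is inr c then c else 0.

Lemma Zhat_of_Nhat_proof (x : Nhat) : isZhat (Zhat_of_Nhat_fun x).
Proof.
rewrite /Zhat_of_Nhat_fun; split=> [n|n l nl].
  by have := Nhat_valid x 0 n; case: (sval x 0 n).
have := Nhat_trans x (leqnn 0) nl; have := Nhat_valid x 0 l.
by case: (sval x 0 l) => [[]|c] //= _ <-.
Qed.

Definition Zhat_of_Nhat (x : Nhat) : Zhat := exist _ _ (Zhat_of_Nhat_proof x).

Lemma Nhat_of_ZhatK : cancel Nhat_of_Zhat Zhat_of_Nhat.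
Proof. by move=> s; apply: Zhat_eq. Qed.

Lemma Nhat_embN (x : Nhat) a : sval x a 0 = inl a -> exists ha : 0 < a, x = embN ha.
Proof.
move=> xa; have := Nhat_valid x a 0; rewrite xa => /andP [a_gt0 _].
exists a_gt0; apply: Nhat_eq => m n /=.
have am : a <= maxn m a := leq_maxr m a.
have := Nhat_trans x am (dvd1n n.+1); rewrite xa.
case xmn: (sval x (maxn m a) n) => [c|//] /=.
rewrite /pimn; case: ifP => // ca [ac]; subst c.
by rewrite -(Nhat_trans x (leq_maxl m a) (dvdnn n.+1)) xmn.
Qed.

Lemma Nhat_Zhat (x : Nhat) : (forall a, sval x a 0 <> inl a) ->
  x = Nhat_of_Zhat (Zhat_of_Nhat x).
Proof.
move=> x_nat; apply: Nhat_eq => m n /=; rewrite /Zhat_of_Nhat_fun.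
have := Nhat_valid x m n; case xmn: (sval x m n) => [c|c] /=.
  case/andP=> _ cm; have := Nhat_trans x cm (dvd1n n.+1).
  by rewrite xmn /= /pimn leqnn => /esym /x_nat.
by move=> cn; rewrite -(Nhat_trans x (leq0n m) (dvdnn n.+1)) xmn /= modn_small.
Qed.

Lemma Nhat_cases (x : Nhat) :
  (exists a (ha : 0 < a), x = embN ha) \/ exists s, x = Nhat_of_Zhat s.
Proof.
have [[a /Nhat_embN]|x_nat] := pselect (exists a, sval x a 0 = inl a).
  by left; exists a.
by right; exists (Zhat_of_Nhat x); apply: Nhat_Zhat => a xa; apply: x_nat; exists a.
Qed.

Lemma nbhs_embN {a} (ha : 0 < a) : nbhs (embN ha) [set embN ha].
Proof.
apply: filterS (nbhs_Nhat_cyl (embN ha) a 0) => y.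
rewrite /= /pimn leqnn => /Nhat_embN [hb ->].
by rewrite (Prop_irrelevance hb ha).
Qed.

Lemma cvg_embZP (u : nat -> nat) (s : Zhat) :
  (embZ \o u) @ \oo --> s <-> forall n, \forall i \near \oo, u i %% n.+1 = sval s n.
Proof. exact: cvg_ZhatP. Qed.

Lemma cvg_embN {u : nat -> nat} (u_gt0 : forall i, 0 < u i) {s : Zhat} :
  (forall M, \forall i \near \oo, M <= u i) -> (embZ \o u) @ \oo --> s ->
  (fun i => embN (u_gt0 i)) @ \oo --> Nhat_of_Zhat s.
Proof.
move=> u_oo /cvg_embZP us; apply/cvg_NhatP => m n.
apply: filterS2 (u_oo m.+1) (us n) => i mu uin.
by rewrite /= /pimn leqNgt mu uin.
Qed.

Definition approx (K : nat) (s : Zhat) (n : nat) : Prop :=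
  K < n /\ forall m, m <= K -> n %% m.+1 = sval s m.

Lemma approx_le {K L} {s : Zhat} {n} : K <= L -> approx L s n -> approx K s n.
Proof.
move=> KL [Ln sn]; split=> [|m mK]; first exact: leq_ltn_trans Ln.
by apply: sn; apply: leq_trans KL.
Qed.

Lemma dvdn_fact_pred m K : m <= K -> m.+1 %| ((K.+1)`!.-1).+1.
Proof. by move=> mK; rewrite prednK ?fact_gt0 // dvdn_fact. Qed.

Lemma Zhat_agree {s t : Zhat} {K m} : sval t (K.+1)`!.-1 = sval s (K.+1)`!.-1 ->
  m <= K -> sval t m = sval s m.
Proof. by move=> ts /dvdn_fact_pred mK; rewrite -(Zhat_mod t mK) ts Zhat_mod. Qed.

Lemma approx_fact {K} {s : Zhat} {n} : K < n -> n %% ((K.+1)`!.-1).+1 = sval s (K.+1)`!.-1 ->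
  approx K s n.
Proof.
move=> Kn ns; split=> // m /dvdn_fact_pred mK.
by rewrite -(modn_dvdm _ mK) ns Zhat_mod.
Qed.

Lemma approx_exists K (s : Zhat) : exists n, approx K s n.
Proof.
exists (K.+1 * ((K.+1)`!.-1).+1 + sval s (K.+1)`!.-1).
apply: approx_fact; first by rewrite ltn_addr // leq_pmulr.
by rewrite modnMDl modn_small // ltnS Zhat_le.
Qed.

Section extension.
Context {R : realType} {X : metricType R} (f : nat -> X) (g : Zhat -> X).
Hypothesis f_cvg_g : forall (s : Zhat) (u : nat -> nat),
  (forall i, 0 < u i) -> (forall M : nat, \forall i \near \oo, M <= u i) ->
  (embZ \o u) @ \oo --> s -> (f \o u) @ \oo --> g s.

Lemma cvg_approx (s : Zhat) (u : nat -> nat) :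
  (forall i, approx i s (u i)) -> (f \o u) @ \oo --> g s.
Proof.
move=> us; apply: f_cvg_g => [i|M|].
- exact: leq_ltn_trans (us i).1.
- by apply: filterS (nbhs_infty_ge M) => i Mi; apply/ltnW/(leq_ltn_trans Mi)/(us i).1.
- apply/cvg_embZP => n; apply: filterS (nbhs_infty_ge n) => i ni.
  exact: (us i).2.
Qed.

Lemma approx_ball (s : Zhat) (e : R) : (0 < e)%R ->
  exists K, forall n, approx K s n -> ball (g s) e (f n).
Proof.
move=> e_gt0; apply: contrapT => /forallNP no_K.
have bad_n K : exists n, approx K s n /\ ~ ball (g s) e (f n).
  by have /existsNP [n /not_implyP] := no_K K; exists n.
have [u us] := choice bad_n.
have [i ball_i] := filter_ex (cvg_ball (cvg_approx s u (fun i => (us i).1)) e_gt0).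
exact: (us i).2 ball_i.
Qed.

Lemma approx_ball_exists (t : Zhat) (e : R) K : (0 < e)%R ->
  exists n, approx K t n /\ ball (g t) e (f n).
Proof.
move=> e_gt0; have [u ut] := choice (fun i => approx_exists i t).
have near_ok : \forall i \near \oo, approx K t (u i) /\ ball (g t) e (f (u i)).
  apply: filterS2 (nbhs_infty_ge K) (cvg_ball (cvg_approx t u ut) e_gt0).
  by move=> i Ki bi; split=> //; exact: approx_le Ki (ut i).
by have [i] := filter_ex near_ok; exists (u i).
Qed.

Definition Nhat_ext (x : Nhat) : X :=
  if pselect (exists a, sval x a 0 = inl a) is left x_nat then f (projT1 (cid x_nat))
  else g (Zhat_of_Nhat x).

Lemma Nhat_ext_embN a (ha : 0 < a) : Nhat_ext (embN ha) = f a.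
Proof.
rewrite /Nhat_ext; case: pselect => [x_nat|]; last by case; exists a; rewrite /= /pimn leqnn.
by case: (cid x_nat) => b /=; rewrite /pimn; case: ifP => // _ [->].
Qed.

Lemma Nhat_ext_Zhat (s : Zhat) : Nhat_ext (Nhat_of_Zhat s) = g s.
Proof. by rewrite /Nhat_ext; case: pselect => [[]|_] //; rewrite Nhat_of_ZhatK. Qed.

Lemma Nhat_ext_continuous : continuous Nhat_ext.
Proof.
move=> x; apply/(cvg_ballP (FF := nbhs_filter x)) => e e_gt0.
have [[a [ha ->]]|[s ->]] := Nhat_cases x.
  near=> y; have -> : y = embN ha by near: y; exact: nbhs_embN.
  exact: ballxx.
have e2_gt0 : (0 < e / 2)%R by rewrite divr_gt0.
have [K Ks] := approx_ball s _ e2_gt0.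
(* A single residue modulo (K + 1)! determines the residues modulo 1, ..., K + 1. *)
near=> y; have : sval y K (K.+1)`!.-1 = inr (sval s (K.+1)`!.-1).
  by near: y; exact: nbhs_Nhat_cyl.
rewrite Nhat_ext_Zhat; have [[b [hb ->]]|[t ->]] := Nhat_cases y.
  rewrite /= /pimn Nhat_ext_embN; case: leqP => // Kb [bs].
  by apply: (le_ball (e1 := e / 2) _ (Ks b (approx_fact Kb bs))); lra.
move=> [ts]; rewrite Nhat_ext_Zhat.
have [n [[Kn tn] gtn]] := approx_ball_exists t _ K e2_gt0.
have sn : approx K s n by split=> // m mK; rewrite tn // (Zhat_agree ts mK).
by rewrite [e]splitr; exact: ball_triangle (Ks n sn) (ball_sym gtn).
Unshelve. all: by end_near.
Qed.

End extension.

Theorem proposition2p2 (R : realType) (X : metricType R) (f : nat -> X) :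
  (exists F : Nhat -> X,
      continuous F /\ forall (n : nat) (hn : (0 < n)%N), F (embN hn) = f n)
  <->
  (exists g : Zhat -> X,
      forall (s : Zhat) (u : nat -> nat),
        (forall i, (0 < u i)%N) ->
        (forall M : nat, \forall i \near \oo, (M <= u i)%N) ->
        ((embZ \o u) @ \oo --> s) ->
        ((f \o u) @ \oo --> g s)).
Proof.
split=> [[F [F_cont F_embN]]|[g f_cvg_g]].
  exists (F \o Nhat_of_Zhat) => s u u_gt0 u_oo us.
  have -> : f \o u = F \o (fun i => embN (u_gt0 i)).
    by apply/funext => i /=; rewrite F_embN.
  exact: cvg_comp (cvg_embN u_gt0 u_oo us) (F_cont _).
exists (Nhat_ext f g); split; first exact: Nhat_ext_continuous.
exact: Nhat_ext_embN.
Qed.
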